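(* Let $\mathcal{X},\mathcal{Y}$ be finite sets, $P_X$ a probability distribution on $\mathcal{X}$ and $d:\mathcal{X}\times\mathcal{Y}\to[0,\infty)$. For every code $\mathcal{C}\subset\mathcal{Y}$ with $M$ codewords, $$D(P_X,\mathcal{C})=\tilde D\big(M^{-1},Q_Y^{\mathcal{C}}\big),$$ where $Q_Y^{\mathcal{C}}$ is the uniform distribution on $\mathcal{C}$. In particular, $D(P_X,R)\ge\inf_{Q_Y}\tilde D(e^{-R},Q_Y)$, the infimum over all probability distributions $Q_Y$ on $\mathcal{Y}$.
   Context: $D(P_X,\mathcal{C})=\mathbb{E}_{P_X}[\min_{y\in\mathcal{C}}d(X,y)]$ and $D(P_X,R)=\min_{\mathcal{C}\subset\mathcal{Y}:|\mathcal{C}|=e^R}D(P_X,\mathcal{C})$. For a distribution $Q_Y$ on $\mathcal{Y}$: $p_{c,x,y,u}=Q_Y\{y': d(x,y')<d(x,y)\}+u\cdot Q_Y\{y': d(x,y')=d(x,y)\}$ and, for $w\in(0,1]$, $\tilde D(w,Q_Y)=w^{-1}\mathbb{E}[d(X,Y)\mathbf{1}\{p_{c,X,Y,U}\le w\}]$ with $X\sim P_X$, $Y\sim Q_Y$, $U$ uniform on $[0,1]$ independent. *)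

From HB Require Import structures.
From mathcomp Require Import all_boot all_order all_algebra.
From mathcomp Require Import all_classical all_reals all_analysis.
Set Implicit Arguments. Unset Strict Implicit. Unset Printing Implicit Defensive.
Import Order.TTheory GRing.Theory Num.Theory.
Local Open Scope classical_set_scope.
Local Open Scope ring_scope.

Section Defs.
Variables (R : realType) (X Y : finType).

Definition is_distr (T : finType) (P : T -> R) : Prop :=
  (forall t, 0 <= P t) /\ \sum_(t : T) P t = 1.

Definition Dcode (P : X -> R) (d : X -> Y -> R) (C : {set Y}) : R :=
  \sum_(x : X) P x * inf [set d x y | y in [set y | y \in C]].

Definition Drate (P : X -> R) (d : X -> Y -> R) (r : R) : R :=
  inf [set Dcode P d C | C in [set C : {set Y} | #|C|%:R = expR r]].

Definition Qlt (Q : Y -> R) (d : X -> Y -> R) (x : X) (y : Y) : R :=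
  \sum_(y' : Y | d x y' < d x y) Q y'.
Definition Qeq (Q : Y -> R) (d : X -> Y -> R) (x : X) (y : Y) : R :=
  \sum_(y' : Y | d x y' == d x y) Q y'.

Definition pc (Q : Y -> R) (d : X -> Y -> R) (x : X) (y : Y) (u : R) : R :=
  Qlt Q d x y + u * Qeq Q d x y.

Definition probU (Q : Y -> R) (d : X -> Y -> R) (x : X) (y : Y) (w : R) : R :=
  fine (@lebesgue_measure R [set u : R | 0 <= u <= 1 /\ pc Q d x y u <= w]).

(* tilde D(w, Q_Y) = w^{-1} E[ d(X,Y) 1{p_{c,X,Y,U} <= w} ],
   X ~ P, Y ~ Q, U ~ Unif[0,1] independent *)
Definition Dtilde (P : X -> R) (d : X -> Y -> R) (w : R) (Q : Y -> R) : R :=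
  w^-1 * \sum_(x : X) \sum_(y : Y) P x * Q y * d x y * probU Q d x y w.

Definition unif_code (C : {set Y}) : Y -> R :=
  fun y => if y \in C then (#|C|%:R)^-1 else 0.

End Defs.

(* Fix x and the uniform distribution Q on a code C of size M, so w = 1/M is
   the mass of a single codeword.  A codeword y farther from x than the
   nearest one leaves at least the mass w of a nearest codeword strictly below
   it, so p_c(x,y,U) <= w never holds.  A nearest codeword y has nothing below
   it, and p_c(x,y,U) = U q <= w with q the total mass of the nearest
   codewords, which happens with probability w/q.  Summing Q(y) d(x,y) w/q
   over the nearest codewords gives w min_{y in C} d(x,y): the randomisation
   U splits the ties so that exactly the mass w sits at the minimal distance.
   The bound on D(P_X,R) follows since every code of size e^R yields its
   uniform distribution as a competitor in the infimum. *)
From HB Require Import structures.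
From mathcomp Require Import all_boot all_order all_algebra.
From mathcomp Require Import all_classical all_reals all_analysis.
From mathcomp Require Import ring.
Set Implicit Arguments. Unset Strict Implicit. Unset Printing Implicit Defensive.
Import Order.TTheory GRing.Theory Num.Theory.
Local Open Scope classical_set_scope.
Local Open Scope ring_scope.

Lemma lebesgue_measure_affine_sublevel01 (R : realType) (a b w : R) :
  0 < b -> w <= a + b ->
  fine (@lebesgue_measure R [set u : R | 0 <= u <= 1 /\ a + u * b <= w])
  = Num.max 0 ((w - a) / b).
Proof.
move=> b_gt0 w_le.
have le1 : (w - a) / b <= 1 by rewrite ler_pdivrMr // mul1r lerBlDl.
have -> : [set u : R | 0 <= u <= 1 /\ a + u * b <= w] = `[0, (w - a) / b]%classic.
  apply/seteqP; split => u /=; rewrite in_itv /= -lerBrDl -ler_pdivlMr //.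
    by move=> [/andP[-> _]].
  by move=> /andP[u_ge0 u_le]; rewrite u_ge0 (le_trans u_le le1).
rewrite lebesgue_measure_itv /= lte_fin.
by case: ltP => _ /=; rewrite ?subr0.
Qed.

Lemma probUE (R : realType) (X Y : finType) (Q : Y -> R)
    (d : X -> Y -> R) x y (w : R) :
  0 < Qeq Q d x y -> w <= Qlt Q d x y + Qeq Q d x y ->
  probU Q d x y w = Num.max 0 ((w - Qlt Q d x y) / Qeq Q d x y).
Proof. exact: lebesgue_measure_affine_sublevel01. Qed.

Lemma ler_term_sum (R : numDomainType) (I : finType) (F : I -> R)
    (p : pred I) i :
  (forall j, 0 <= F j) -> p i -> F i <= \sum_(j | p j) F j.
Proof. by move=> F_ge0 pi; rewrite (bigD1 i) //= lerDl sumr_ge0. Qed.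

Lemma inf_image_least (R : realType) (Y : finType) (f : Y -> R)
    (C : {set Y}) y0 :
  y0 \in C -> (forall y, y \in C -> f y0 <= f y) ->
  inf [set f y | y in [set y | y \in C]] = f y0.
Proof.
move=> y0C least; apply/le_anti/andP; split.
  by apply: ge_inf; [exists (f y0) => _ [y /= yC <-]; apply: least | exists y0].
by apply: lb_le_inf; [exists (f y0), y0 | move=> _ [y /= yC <-]; apply: least].
Qed.

Section UniformCode.
Variables (R : realType) (Y : finType) (C : {set Y}).

Lemma unif_code_ge0 y : 0 <= unif_code R C y.
Proof. by rewrite /unif_code; case: ifP; rewrite ?invr_ge0. Qed.

Lemma unif_code_in y : y \in C -> unif_code R C y = #|C|%:R^-1.
Proof. by rewrite /unif_code => ->. Qed.

Lemma unif_code_notin y : y \notin C -> unif_code R C y = 0.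
Proof. by rewrite /unif_code => /negbTE ->. Qed.

Lemma is_distr_unif_code : (0 < #|C|)%N -> is_distr (unif_code R C).
Proof.
move=> C_gt0; split; first exact: unif_code_ge0.
rewrite /unif_code -big_mkcond /= sumr_const -(mulr_natr #|C|%:R^-1) mulVf //.
by rewrite pnatr_eq0 -lt0n.
Qed.

Variables (X : finType) (d : X -> Y -> R) (x : X) (y0 : Y).
Hypotheses (y0C : y0 \in C) (y0_nearest : forall y, y \in C -> d x y0 <= d x y).

Local Notation Q := (unif_code R C).
Local Notation w := (#|C|%:R^-1 : R).

Lemma inv_card_gt0 : 0 < w.
Proof. by rewrite invr_gt0 ltr0n; apply/card_gt0P; exists y0. Qed.

Lemma inv_card_le_sum (p : pred Y) y :
  y \in C -> p y -> w <= \sum_(y' | p y') Q y'.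
Proof.
by move=> yC py; rewrite -(unif_code_in yC); apply: ler_term_sum unif_code_ge0 py.
Qed.

Lemma probU_unif_code y : y \in C ->
  probU Q d x y w = if d x y == d x y0 then w / Qeq Q d x y0 else 0.
Proof.
move=> yC.
have w_le_Qeq : w <= Qeq Q d x y by apply: inv_card_le_sum yC _.
have Qlt_ge0 : 0 <= Qlt Q d x y by apply: sumr_ge0 => y' _; apply: unif_code_ge0.
have Qeq_gt0 : 0 < Qeq Q d x y := lt_le_trans inv_card_gt0 w_le_Qeq.
rewrite probUE //; last by rewrite -[w]add0r lerD.
case: eqP => [dy|dy].
  have -> : Qlt Q d x y = 0.
    apply: big1 => y' lt_y'; apply: unif_code_notin; apply: contraTN lt_y'.
    by move=> /y0_nearest; rewrite -dy leNgt.
  move: Qeq_gt0; rewrite /Qeq dy subr0 => q_gt0.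
  by apply/max_idPr; rewrite divr_ge0 ?ltW ?inv_card_gt0.
apply/max_idPl; rewrite pmulr_lle0 ?invr_gt0 // subr_le0.
apply: (inv_card_le_sum y0C).
by rewrite lt_neqAle y0_nearest // andbT eq_sym; apply/eqP.
Qed.

Lemma sum_unif_code_probU :
  \sum_(y : Y) Q y * (d x y * probU Q d x y w) = w * d x y0.
Proof.
have q_gt0 : 0 < Qeq Q d x y0.
  exact: lt_le_trans inv_card_gt0 (inv_card_le_sum y0C _).
transitivity (\sum_(y | d x y == d x y0) Q y * (d x y0 * (w / Qeq Q d x y0))).
  rewrite [RHS]big_mkcond; apply: eq_bigr => y _.
  have [yC|ynC] := boolP (y \in C).
    by rewrite probU_unif_code //; case: eqP => [->|_]; rewrite ?mulr0.
  by rewrite unif_code_notin // !mul0r if_same.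
rewrite -mulr_suml -/(Qeq Q d x y0); field.
by rewrite !gt_eqF // -invr_gt0 inv_card_gt0.
Qed.

End UniformCode.

Lemma Dcode_unif_code (R : realType) (X Y : finType) (P : X -> R)
    (d : X -> Y -> R) (C : {set Y}) :
  (0 < #|C|)%N -> Dcode P d C = Dtilde P d #|C|%:R^-1 (unif_code R C).
Proof.
move=> C_gt0; rewrite /Dtilde /Dcode invrK mulr_sumr; apply: eq_bigr => x _.
have /card_gt0P[y1 y1C] := C_gt0.
case: (arg_minP (d x) y1C) => y0 y0C y0_nearest.
rewrite (inf_image_least y0C y0_nearest).
under eq_bigr => y _ do rewrite -!mulrA.
by rewrite -mulr_sumr (sum_unif_code_probU y0C y0_nearest) mulrCA mulVKf // pnatr_eq0 -lt0n.
Qed.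

Lemma Dtilde_ge0 (R : realType) (X Y : finType) (P : X -> R)
    (d : X -> Y -> R) (w : R) (Q : Y -> R) :
  (forall x, 0 <= P x) -> (forall x y, 0 <= d x y) -> (forall y, 0 <= Q y) ->
  0 <= w -> 0 <= Dtilde P d w Q.
Proof.
move=> P_ge0 d_ge0 Q_ge0 w_ge0; rewrite /Dtilde mulr_ge0 ?invr_ge0 //.
apply: sumr_ge0 => x _; apply: sumr_ge0 => y _.
by rewrite !mulr_ge0 // fine_ge0 // measure_ge0.
Qed.

Theorem theorem2 (R : realType) (X Y : finType) (P : X -> R) (d : X -> Y -> R) :
  is_distr P -> (forall x y, 0 <= d x y) ->
  (forall (C : {set Y}) (M : nat), (0 < M)%N -> #|C| = M ->
     Dcode P d C = Dtilde P d (M%:R)^-1 (unif_code R C))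
  /\
  (forall r : R, (exists C : {set Y}, #|C|%:R = expR r) ->
     Drate P d r >= inf [set Dtilde P d (expR (- r)) Q | Q in [set Q : Y -> R | is_distr Q]]).
Proof.
move=> [P_ge0 _] d_ge0.
split=> [C M M_gt0 CM|r [C0 C0r]]; first by subst M; apply: Dcode_unif_code.
apply: lb_le_inf; first by exists (Dcode P d C0), C0.
move=> _ [C /= Cr <-].
have C_gt0 : (0 < #|C|)%N by rewrite -(ltr0n R) Cr expR_gt0.
rewrite Dcode_unif_code //; apply: ge_inf.
  exists 0 => _ [Q [Q_ge0 _] <-].
  exact: Dtilde_ge0 P_ge0 d_ge0 Q_ge0 (expR_ge0 _).
by exists (unif_code R C); [apply: is_distr_unif_code | rewrite expRN -Cr].
Qed.
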